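(* Let $\mathcal T$ be the set of all finite strings of $0$'s and $1$'s (of length $\ge 1$), and for $\sigma=(\sigma_1,\dots,\sigma_{\ell(\sigma)})\in\mathcal T$ let $I(\sigma)=\left(\sum_{i=1}^{\ell(\sigma)}\sigma_i2^{-i},\;2^{-\ell(\sigma)}+\sum_{i=1}^{\ell(\sigma)}\sigma_i2^{-i}\right]$ and $d_\sigma=\mathbf 1_{I(\sigma)}$. Let $\Psi:\mathcal T\to\mathbb Z\setminus\{0\}$ be injective, let $d=\mathbf 1_{(0,1]}$, and for $\sigma\in\mathcal T$ let $f_\sigma=d_\sigma+\ell(\sigma)\cdot\mathbf 1_{(\Psi(\sigma),\Psi(\sigma)+1]}$. Then the subset $M=\{0,d\}\cup\{f_\sigma:\sigma\in\mathcal T\}$ of $L_1(-\infty,\infty)$, with the $L_1$ metric, is locally finite and admits no isometric embedding into $\ell_1$.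
   Context: $\ell(\sigma)$ denotes the length of the string $\sigma$, and $\mathbf 1_I$ the indicator function of a set $I\subset\mathbb R$. A metric space is locally finite if every ball of finite radius in it has finite cardinality. *)

From Stdlib Require Import Reals List ZArith.
Open Scope R_scope.

(* Strings of 0/1 are lists of booleans; T = nonempty ones. *)
Definition bitR (b : bool) : R := if b then 1 else 0.

Fixpoint bsum (k : nat) (s : list bool) : R :=
  match s with
  | nil => 0
  | b :: t => bitR b * (/2) ^ (k + 1) + bsum (S k) t
  end.

Definition leftI (s : list bool) : R := bsum 0 s.

Definition ind (a b : R) (x : R) : R :=
  if Rlt_dec a x then (if Rle_dec x b then 1 else 0) else 0.

Definition d_sigma (s : list bool) : R -> R :=
  ind (leftI s) ((/2) ^ length s + leftI s).

Definition d_fun : R -> R := ind 0 1.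

Definition zero_fun : R -> R := fun _ => 0.

Definition f_sigma (Psi : list bool -> Z) (s : list bool) : R -> R :=
  fun x => d_sigma s x + INR (length s) * ind (IZR (Psi s)) (IZR (Psi s) + 1) x.

Definition inM (Psi : list bool -> Z) (g : R -> R) : Prop :=
  g = zero_fun \/ g = d_fun \/ exists s, s <> nil /\ g = f_sigma Psi s.

Definition is_L1dist (f g : R -> R) (D : R) : Prop :=
  forall eps, eps > 0 -> exists N : R, forall a b, a <= - N -> N <= b ->
    exists pr : Riemann_integrable (fun x => Rabs (f x - g x)) a b,
      Rabs (RiemannInt pr - D) < eps.

Definition in_l1 (u : nat -> R) : Prop :=
  exists l, infinite_sum (fun n => Rabs (u n)) l.

Definition M_locally_finite (Psi : list bool -> Z) : Prop :=
  forall x r, inM Psi x ->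
    exists l : list (R -> R), forall y D, inM Psi y -> is_L1dist x y D -> D <= r -> In y l.

Definition M_l1_isometric_embedding (Psi : list bool -> Z)
    (phi : (R -> R) -> (nat -> R)) : Prop :=
  (forall x, inM Psi x -> in_l1 (phi x)) /\
  (forall x y D, inM Psi x -> inM Psi y -> is_L1dist x y D ->
     infinite_sum (fun n => Rabs (phi x n - phi y n)) D).

From Pilot Require Import Defs.
From Stdlib Require Import Reals List FinFun ZArith Lra Lia.
From Coquelicot Require Import Coquelicot.
Open Scope R_scope.

(* Suppose phi embeds M isometrically into l1 and write a, b, X_s for phi 0, phi d, phi f_s.
   In L1, d(0, f_s) = n + 2^-n and d(d, f_s) = n + 1 - 2^-n for n = l(s), so the Gromov
   product (f_s | d)_0 is 2^-n, and two distinct strings of the same length give f_s, f_t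
   with disjoint supports, so 0 lies on a geodesic between them.  In l1 the Gromov product
   is the sum of the coordinatewise products (x_k | b_k)_(a_k), each in [0, |a_k - b_k|],
   and on the real line a point lying between x and y has vanishing product with x or
   with y.  So in every coordinate at most one of the 2^n strings of length n contributes,
   by at most 2^-n, while together they exhaust ||a - b||_1 = 1 = 2^n * 2^-n; hence
   |a_k - b_k| <= 2^-n for all n, i.e. a = b.
   Local finiteness holds because d(0, f_s) >= l(s). *)

Lemma is_RInt_const_on (f : R -> R) a b v :
  (forall x, Rmin a b < x < Rmax a b -> f x = v) -> is_RInt f a b ((b - a) * v).
Proof.
  intros Hf. apply is_RInt_ext with (fun _ => v); [intros x Hx; symmetry; auto|].
  apply (is_RInt_const (V := R_NormedModule)).
Qed.

Lemma is_RInt_ind a b c e : a <= c -> c <= e -> e <= b -> is_RInt (Defs.ind c e) a b (e - c).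
Proof.
  intros Hac Hce Heb.
  replace (e - c) with ((c - a) * 0 + (e - c) * 1 + (b - e) * 0) by ring.
  apply (is_RInt_Chasles (V := R_NormedModule) _ _ e);
    [apply (is_RInt_Chasles (V := R_NormedModule) _ _ c)|];
    apply is_RInt_const_on; intros x Hx;
    rewrite Rmin_left, Rmax_right in Hx by lra; unfold Defs.ind;
    destruct (Rlt_dec c x); try destruct (Rle_dec x e); lra.
Qed.

Lemma is_RInt_step a b L R P m : a <= L -> L <= R -> R <= b -> a <= P -> P + 1 <= b ->
  is_RInt (fun z => Defs.ind L R z + m * Defs.ind P (P + 1) z) a b (R - L + m * (P + 1 - P)).
Proof.
  intros. apply (is_RInt_plus (V := R_NormedModule));
    [|apply (is_RInt_scal (V := R_NormedModule))]; apply is_RInt_ind; lra.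
Qed.

Lemma is_L1dist_of_is_RInt (f g h : R -> R) D p q :
  (forall z, Rabs (f z - g z) = h z) ->
  (forall a b, a <= p -> q <= b -> is_RInt h a b D) -> is_L1dist f g D.
Proof.
  intros Hh HI eps Heps. exists (Rmax (- p) q). intros a b Ha Hb.
  pose proof (Rmax_l (- p) q); pose proof (Rmax_r (- p) q).
  assert (Hi : is_RInt (fun x => Rabs (f x - g x)) a b D).
  { apply is_RInt_ext with h; [intros; symmetry; auto | apply HI; lra]. }
  exists (ex_RInt_Reals_0 _ _ _ (ex_intro _ D Hi)).
  rewrite <- RInt_Reals, (is_RInt_unique _ _ _ _ Hi), Rminus_diag, Rabs_R0. lra.
Qed.

Lemma is_L1dist_triangle w x y A B D :
  is_L1dist x y D -> is_L1dist w x A -> is_L1dist w y B -> B <= A + D.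
Proof.
  intros Hxy Hwx Hwy. apply Rnot_lt_le. intro Hlt.
  set (eps := (B - A - D) / 3). assert (Heps : eps > 0) by (unfold eps; lra).
  destruct (Hxy eps Heps) as [N1 HN1], (Hwx eps Heps) as [N2 HN2], (Hwy eps Heps) as [N3 HN3].
  set (N := Rmax (Rmax 1 N1) (Rmax N2 N3)).
  pose proof (Rmax_l (Rmax 1 N1) (Rmax N2 N3)); pose proof (Rmax_r (Rmax 1 N1) (Rmax N2 N3)).
  pose proof (Rmax_l 1 N1); pose proof (Rmax_r 1 N1); pose proof (Rmax_l N2 N3); pose proof (Rmax_r N2 N3).
  destruct (HN1 (- N) N) as [pr1 E1], (HN2 (- N) N) as [pr2 E2], (HN3 (- N) N) as [pr3 E3];
    try (unfold N; lra).
  assert (Hle : RiemannInt pr3 <= RiemannInt (RiemannInt_P10 1 pr2 pr1)).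
  { apply RiemannInt_P19; [unfold N; lra|]. intros z _. rewrite Rmult_1_l.
    replace (w z - y z) with ((w z - x z) + (x z - y z)) by ring. apply Rabs_triang. }
  rewrite (RiemannInt_P13 pr2 pr1) in Hle.
  apply Rabs_def2 in E1, E2, E3. unfold eps in *. lra.
Qed.

Lemma half_pow_pos n : 0 < (/2) ^ n.
Proof. apply pow_lt; lra. Qed.

Lemma bsum_bounds s : forall k, 0 <= bsum k s /\ bsum k s + (/2) ^ (k + length s) <= (/2) ^ k.
Proof.
  induction s as [|b t IH]; intros k; simpl.
  - rewrite Nat.add_0_r. lra.
  - destruct (IH (S k)) as [H1 H2].
    replace (k + S (length t))%nat with (S k + length t)%nat by lia.
    replace (k + 1)%nat with (S k) by lia.
    simpl in *. pose proof (half_pow_pos k).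
    destruct b; unfold bitR; lra.
Qed.

Lemma bsum_separated s : forall t k, length s = length t -> s <> t ->
  bsum k s + (/2) ^ (k + length s) <= bsum k t \/ bsum k t + (/2) ^ (k + length t) <= bsum k s.
Proof.
  induction s as [|b s IH]; intros [|c t] k Hl Hne; simpl in *; try discriminate; [congruence|].
  injection Hl as Hl.
  replace (k + S (length s))%nat with (S k + length s)%nat by lia.
  replace (k + S (length t))%nat with (S k + length t)%nat by lia.
  replace (k + 1)%nat with (S k) by lia.
  destruct (Bool.bool_dec b c) as [<-|Hbc].
  - assert (s <> t) by congruence.
    destruct (IH t (S k) Hl H); lra.
  - destruct (bsum_bounds s (S k)), (bsum_bounds t (S k)).
    destruct b, c; try congruence; unfold bitR; lra.
Qed.

Lemma leftI_bounds s : 0 <= leftI s /\ (/2) ^ length s + leftI s <= 1.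
Proof. unfold leftI. pose proof (bsum_bounds s 0). simpl in *. lra. Qed.

Lemma leftI_separated s t : length s = length t -> s <> t ->
  (/2) ^ length s + leftI s <= leftI t \/ (/2) ^ length t + leftI t <= leftI s.
Proof. intros Hl Hst. unfold leftI. pose proof (bsum_separated s t 0 Hl Hst). simpl in *. lra. Qed.

Fixpoint strings (n : nat) : list (list bool) :=
  match n with
  | O => nil :: nil
  | S m => map (cons true) (strings m) ++ map (cons false) (strings m)
  end.

Lemma in_strings n s : In s (strings n) <-> length s = n.
Proof.
  revert s; induction n as [|n IH]; intros s; simpl.
  - split; [intros [<-|[]]; reflexivity | destruct s; [auto | discriminate]].
  - rewrite in_app_iff, !in_map_iff. split.
    + intros [[t [<- Ht]]|[t [<- Ht]]]; simpl; f_equal; apply IH; exact Ht.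
    + destruct s as [|[] t]; simpl; intros Hl; try discriminate; injection Hl as Hl;
        [left | right]; exists t; split; auto; apply IH; exact Hl.
Qed.

Lemma NoDup_strings n : NoDup (strings n).
Proof.
  induction n as [|n IH]; simpl; [repeat constructor; auto|].
  apply NoDup_app; try (apply Injective_map_NoDup; [intros ? ? E; injection E; auto | exact IH]).
  intros s H1 H2. apply in_map_iff in H1 as [t [<- _]]. apply in_map_iff in H2 as [u [E _]]. discriminate.
Qed.

Lemma length_strings n : length (strings n) = (2 ^ n)%nat.
Proof. induction n as [|n IH]; simpl; auto. rewrite length_app, !length_map, IH. lia. Qed.

Lemma strings_mass n : INR (length (strings n)) * (/2) ^ n = 1.
Proof.
  rewrite length_strings, pow_INR, <- Rpow_mult_distr.
  replace (INR 2 * /2) with 1 by (simpl; field). apply pow1.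
Qed.

Lemma le_0_of_le_half_pow (x : R) : (forall n, x <= (/2) ^ S n) -> x <= 0.
Proof.
  intros H. apply Rnot_lt_le. intro Hx.
  destruct (pow_lt_1_zero (/2) ltac:(rewrite Rabs_pos_eq; lra) x Hx) as [N HN].
  specialize (HN (S N) ltac:(lia)). specialize (H N).
  rewrite Rabs_pos_eq in HN by apply Rlt_le, half_pow_pos. lra.
Qed.

Lemma IZR_nonzero_gap (z : Z) : z <> 0%Z -> IZR z + 1 <= 0 \/ 1 <= IZR z.
Proof.
  intros H. assert ((z <= -1)%Z \/ (1 <= z)%Z) as [H1|H1] by lia; apply IZR_le in H1; lra.
Qed.

Lemma IZR_neq_gap (z w : Z) : z <> w -> IZR z + 1 <= IZR w \/ IZR w + 1 <= IZR z.
Proof.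
  intros H. assert ((z + 1 <= w)%Z \/ (w + 1 <= z)%Z) as [H1|H1] by lia;
    apply IZR_le in H1; rewrite plus_IZR in H1; lra.
Qed.

Ltac ind_cases := unfold Defs.ind;
  repeat match goal with |- context [Rlt_dec ?a ?b] => destruct (Rlt_dec a b)
                      | |- context [Rle_dec ?a ?b] => destruct (Rle_dec a b) end;
  unfold Rabs; destruct Rcase_abs; lra.

Lemma abs_zero_sub_step L R P m z : 0 <= L -> L <= R -> 0 <= m ->
  Rabs (0 - (Defs.ind L R z + m * Defs.ind P (P + 1) z))
  = Defs.ind L R z + m * Defs.ind P (P + 1) z.
Proof. intros. ind_cases. Qed.

Lemma abs_ind01_sub_step L R P m z :
  0 <= L -> L <= R -> R <= 1 -> P + 1 <= 0 \/ 1 <= P -> 0 <= m ->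
  Rabs (Defs.ind 0 1 z - (Defs.ind L R z + m * Defs.ind P (P + 1) z))
  = (Defs.ind 0 1 z - Defs.ind L R z) + m * Defs.ind P (P + 1) z.
Proof. intros ? ? ? [] ?; ind_cases. Qed.

Lemma abs_step_sub_step L R P L' R' P' m z :
  0 <= L -> L <= R -> R <= 1 -> P + 1 <= 0 \/ 1 <= P ->
  0 <= L' -> L' <= R' -> R' <= 1 -> P' + 1 <= 0 \/ 1 <= P' -> 0 <= m ->
  R <= L' \/ R' <= L -> P + 1 <= P' \/ P' + 1 <= P ->
  Rabs ((Defs.ind L R z + m * Defs.ind P (P + 1) z) - (Defs.ind L' R' z + m * Defs.ind P' (P' + 1) z))
  = (Defs.ind L R z + m * Defs.ind P (P + 1) z) + (Defs.ind L' R' z + m * Defs.ind P' (P' + 1) z).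
Proof. intros ? ? ? [] ? ? ? [] ? [] []; ind_cases. Qed.

Lemma is_series_term_le (u : nat -> R) l : (forall n, 0 <= u n) -> is_series u l -> forall k, u k <= l.
Proof.
  intros Hp Hs k. apply is_series_Reals in Hs.
  assert (G : Un_growing (sum_f_R0 u)) by (intro n; simpl; pose proof (Hp (S n)); lra).
  pose proof (growing_ineq _ _ G Hs k).
  destruct k; simpl in *; auto. pose proof (cond_pos_sum u k Hp). lra.
Qed.

Lemma is_series_le_eq (u v : nat -> R) l :
  (forall k, u k <= v k) -> is_series u l -> is_series v l -> forall k, u k = v k.
Proof.
  intros Huv Hu Hv k.
  pose proof (is_series_minus (V := R_NormedModule) v u l l Hv Hu) as Hvu.
  assert (Hvu0 : is_series (fun n => v n - u n) 0).
  { eapply is_series_ext; [|rewrite <- (Rminus_diag l); exact Hvu]. reflexivity. }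
  assert (Hpos : forall n, 0 <= v n - u n) by (intro n; pose proof (Huv n); lra).
  pose proof (is_series_term_le _ 0 Hpos Hvu0 k). pose proof (Huv k). lra.
Qed.

Lemma is_series_const0 : is_series (fun _ : nat => 0) 0.
Proof.
  apply is_series_Reals. intros eps Heps. exists O. intros n _.
  rewrite sum_cte. unfold R_dist. rewrite Rmult_0_l, Rminus_diag, Rabs_R0. exact Heps.
Qed.

Lemma is_series_zero_terms (u : nat -> R) l : (forall k, u k = 0) -> is_series u l -> l = 0.
Proof.
  intros Hu Hs. apply (is_series_ext _ (fun _ => 0)) in Hs; [|exact Hu].
  rewrite <- (is_series_unique _ _ Hs). apply is_series_unique, is_series_const0.
Qed.

Definition lsum {A : Type} (L : list A) (F : A -> R) : R := fold_right (fun s acc => F s + acc) 0 L.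

Lemma is_series_lsum {A : Type} (L : list A) (G : A -> nat -> R) (V : A -> R) :
  (forall s, In s L -> is_series (G s) (V s)) ->
  is_series (fun k => lsum L (fun s => G s k)) (lsum L V).
Proof.
  induction L as [|s L IH]; intros H; simpl; [exact is_series_const0|].
  apply (is_series_plus (V := R_NormedModule)); [apply H | apply IH; intros; apply H]; simpl; auto.
Qed.

Lemma lsum_const {A : Type} (L : list A) c : lsum L (fun _ => c) = INR (length L) * c.
Proof. induction L as [|s L IH]; simpl length; [simpl; ring|]. rewrite S_INR. simpl. rewrite IH. ring. Qed.

Lemma lsum_zero {A : Type} (L : list A) F : (forall s, In s L -> F s = 0) -> lsum L F = 0.
Proof.
  induction L as [|s L IH]; intros H; simpl; [reflexivity|].
  rewrite H by (simpl; auto). rewrite IH by (intros; apply H; simpl; auto). ring.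
Qed.

Lemma lsum_le_of_disjoint_support {A : Type} (L : list A) F c :
  NoDup L -> 0 <= c -> (forall s, In s L -> 0 <= F s <= c) ->
  (forall s t, In s L -> In t L -> s <> t -> F s = 0 \/ F t = 0) -> lsum L F <= c.
Proof.
  induction L as [|s L IH]; intros Hnd Hc Hb Hd; simpl; [exact Hc|].
  apply NoDup_cons_iff in Hnd as [Hs Hnd].
  destruct (Req_dec (F s) 0) as [E|E].
  - rewrite E, Rplus_0_l. apply IH; auto; intros; [apply Hb | apply Hd]; simpl; auto.
  - rewrite lsum_zero; [pose proof (Hb s (or_introl eq_refl)); lra|].
    intros t Ht. destruct (Hd s t) as [H|H]; simpl; auto; congruence.
Qed.

Definition gromov (a b x : R) : R := (Rabs (a - x) + Rabs (a - b) - Rabs (b - x)) / 2.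

Lemma gromov_bounds a b x : 0 <= gromov a b x <= Rabs (a - b).
Proof. unfold gromov, Rabs; repeat destruct Rcase_abs; lra. Qed.

Lemma gromov_between a b x y : Rabs (x - y) = Rabs (a - x) + Rabs (a - y) ->
  gromov a b x = 0 \/ gromov a b y = 0.
Proof.
  unfold gromov. intros H.
  destruct (Req_dec ((Rabs (a - x) + Rabs (a - b) - Rabs (b - x)) / 2) 0) as [E|E]; [left; exact E|right].
  revert H E. unfold Rabs; repeat destruct Rcase_abs; intros; lra.
Qed.

Lemma is_series_gromov (a b x : nat -> R) (A D B : R) :
  is_series (fun k => Rabs (a k - x k)) A -> is_series (fun k => Rabs (a k - b k)) D ->
  is_series (fun k => Rabs (b k - x k)) B ->
  is_series (fun k => gromov (a k) (b k) (x k)) ((A + D - B) / 2).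
Proof.
  intros HA HD HB.
  pose proof (is_series_scal (V := R_NormedModule) (/2) _ _
    (is_series_minus (V := R_NormedModule) _ _ _ _ (is_series_plus (V := R_NormedModule) _ _ _ _ HA HD) HB)) as H.
  replace ((A + D - B) / 2) with (scal (/2) (plus (plus A D) (opp B))).
  - eapply is_series_ext; [|exact H]. intro k.
    unfold gromov, scal, plus, opp; simpl. unfold mult; simpl. unfold Rdiv. ring.
  - unfold scal, plus, opp; simpl. unfold mult; simpl. unfold Rdiv. ring.
Qed.

Lemma l1_between_coordinates (a x y : nat -> R) (A B : R) :
  is_series (fun k => Rabs (a k - x k)) A -> is_series (fun k => Rabs (a k - y k)) B ->
  is_series (fun k => Rabs (x k - y k)) (A + B) ->
  forall k, Rabs (x k - y k) = Rabs (a k - x k) + Rabs (a k - y k).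
Proof.
  intros HA HB Hxy. apply (is_series_le_eq _ _ (A + B)); [|exact Hxy|].
  - intros k. replace (x k - y k) with (- (a k - x k) + (a k - y k)) by ring.
    rewrite <- (Rabs_Ropp (a k - x k)). apply Rabs_triang.
  - apply (is_series_plus (V := R_NormedModule)); assumption.
Qed.

Lemma l1_coordinate_le_gromov {A : Type} (a b : nat -> R) (X : A -> nat -> R) (L : list A) (delta g : R) :
  NoDup L -> 0 <= g ->
  is_series (fun k => Rabs (a k - b k)) delta ->
  (forall s, In s L -> is_series (fun k => gromov (a k) (b k) (X s k)) g) ->
  (forall s t, In s L -> In t L -> s <> t ->
     forall k, Rabs (X s k - X t k) = Rabs (a k - X s k) + Rabs (a k - X t k)) ->
  INR (length L) * g = delta ->
  forall k, Rabs (a k - b k) <= g.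
Proof.
  intros Hnd Hg0 Hab Hg Hbetween Hcount.
  set (T := fun k => lsum L (fun s => gromov (a k) (b k) (X s k))).
  assert (Hdisj : forall k s t, In s L -> In t L -> s <> t ->
            gromov (a k) (b k) (X s k) = 0 \/ gromov (a k) (b k) (X t k) = 0)
    by (intros; apply gromov_between, Hbetween; auto).
  assert (HT : is_series T delta).
  { rewrite <- Hcount, <- lsum_const. apply is_series_lsum. exact Hg. }
  assert (HTab : forall k, T k <= Rabs (a k - b k)).
  { intro k. apply lsum_le_of_disjoint_support; auto using Rabs_pos, gromov_bounds. }
  assert (HTg : forall k, T k <= g).
  { intro k. apply lsum_le_of_disjoint_support; auto. intros s Hs.
    split; [apply gromov_bounds|].
    apply (is_series_term_le (fun k => gromov (a k) (b k) (X s k)) g); auto. intro; apply gromov_bounds. }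
  intro k. rewrite <- (is_series_le_eq T _ delta HTab HT Hab k). apply HTg.
Qed.

Lemma L1dist_zero_zero : is_L1dist zero_fun zero_fun 0.
Proof.
  apply is_L1dist_of_is_RInt with (fun _ => 0) 0 0.
  - intros z. unfold zero_fun. rewrite Rminus_diag, Rabs_R0. reflexivity.
  - intros a b _ _. pose proof (is_RInt_const_on (fun _ => 0) a b 0 (fun _ _ => eq_refl)) as H.
    now rewrite Rmult_0_r in H.
Qed.

Lemma L1dist_zero_d : is_L1dist zero_fun d_fun 1.
Proof.
  apply is_L1dist_of_is_RInt with (Defs.ind 0 1) 0 1.
  - intros z. unfold zero_fun, d_fun. ind_cases.
  - intros a b Ha Hb. replace 1 with (1 - 0) at 2 by ring. apply is_RInt_ind; lra.
Qed.

Section TheSpaceM.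
Variable Psi : list bool -> Z.
Hypothesis Psi_nz : forall s, s <> nil -> Psi s <> 0%Z.

Lemma L1dist_zero_f s : s <> nil ->
  is_L1dist zero_fun (f_sigma Psi s) (INR (length s) + (/2) ^ length s).
Proof.
  intros Hs. destruct (leftI_bounds s). pose proof (half_pow_pos (length s)).
  pose proof (IZR_nonzero_gap _ (Psi_nz s Hs)). pose proof (pos_INR (length s)).
  set (P := IZR (Psi s)) in *.
  apply is_L1dist_of_is_RInt with (f_sigma Psi s) (Rmin 0 P) (Rmax 1 (P + 1)).
  - intros z. apply abs_zero_sub_step; lra.
  - intros a b Ha Hb. pose proof (Rmin_l 0 P); pose proof (Rmin_r 0 P).
    pose proof (Rmax_l 1 (P + 1)); pose proof (Rmax_r 1 (P + 1)).
    replace (INR (length s) + (/2) ^ length s)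
      with ((/2) ^ length s + leftI s - leftI s + INR (length s) * (P + 1 - P)) by ring.
    apply is_RInt_step; lra.
Qed.

Lemma L1dist_d_f s : s <> nil ->
  is_L1dist d_fun (f_sigma Psi s) (INR (length s) + 1 - (/2) ^ length s).
Proof.
  intros Hs. destruct (leftI_bounds s). pose proof (half_pow_pos (length s)).
  pose proof (IZR_nonzero_gap _ (Psi_nz s Hs)). pose proof (pos_INR (length s)).
  set (P := IZR (Psi s)) in *.
  apply is_L1dist_of_is_RInt with
    (fun z => (Defs.ind 0 1 z - d_sigma s z) + INR (length s) * Defs.ind P (P + 1) z)
    (Rmin 0 P) (Rmax 1 (P + 1)).
  - intros z. apply abs_ind01_sub_step; lra.
  - intros a b Ha Hb. pose proof (Rmin_l 0 P); pose proof (Rmin_r 0 P).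
    pose proof (Rmax_l 1 (P + 1)); pose proof (Rmax_r 1 (P + 1)).
    replace (INR (length s) + 1 - (/2) ^ length s)
      with ((1 - 0) - ((/2) ^ length s + leftI s - leftI s) + INR (length s) * (P + 1 - P)) by ring.
    apply (is_RInt_plus (V := R_NormedModule));
      [apply (is_RInt_minus (V := R_NormedModule)) | apply (is_RInt_scal (V := R_NormedModule))];
      apply is_RInt_ind; lra.
Qed.

Lemma L1dist_zero_M x : inM Psi x -> exists A, is_L1dist zero_fun x A.
Proof.
  intros [->|[->|[s [Hs ->]]]].
  - exists 0; apply L1dist_zero_zero.
  - exists 1; apply L1dist_zero_d.
  - eexists; apply L1dist_zero_f; auto.
Qed.

Lemma M_is_locally_finite : M_locally_finite Psi.
Proof.
  intros x r Hx. destruct (L1dist_zero_M x Hx) as [A HA].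
  destruct (INR_unbounded (A + r)) as [K HK].
  exists (zero_fun :: d_fun :: map (f_sigma Psi) (flat_map strings (seq 0 (S K)))).
  intros y D Hy HD Hr.
  destruct Hy as [->|[->|[s [Hs ->]]]]; [left; auto | right; left; auto | right; right].
  apply in_map, in_flat_map. exists (length s). split; [|apply in_strings; reflexivity].
  apply in_seq. split; [lia|].
  pose proof (is_L1dist_triangle _ _ _ _ _ _ HD HA (L1dist_zero_f s Hs)).
  pose proof (half_pow_pos (length s)).
  destruct (le_lt_dec (length s) K) as [Hl|Hl]; [lia|].
  apply lt_INR in Hl. lra.
Qed.

Hypothesis Psi_inj : forall s t, s <> nil -> t <> nil -> Psi s = Psi t -> s = t.

Lemma L1dist_f_f s t : s <> nil -> t <> nil -> s <> t -> length s = length t ->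
  is_L1dist (f_sigma Psi s) (f_sigma Psi t) (2 * INR (length s) + 2 * (/2) ^ length s).
Proof.
  intros Hs Ht Hst Hl. destruct (leftI_bounds s), (leftI_bounds t).
  pose proof (half_pow_pos (length s)). pose proof (pos_INR (length s)).
  pose proof (IZR_nonzero_gap _ (Psi_nz s Hs)).
  pose proof (IZR_nonzero_gap _ (Psi_nz t Ht)).
  assert (HPst : Psi s <> Psi t) by (intro E; apply Hst; auto).
  pose proof (IZR_neq_gap _ _ HPst). pose proof (leftI_separated s t Hl Hst).
  rewrite <- Hl in *. set (P := IZR (Psi s)) in *. set (P' := IZR (Psi t)) in *.
  apply is_L1dist_of_is_RInt with (fun z => f_sigma Psi s z + f_sigma Psi t z)
    (Rmin (Rmin 0 P) P') (Rmax (Rmax 1 (P + 1)) (P' + 1)).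
  - intros z. unfold f_sigma, d_sigma. rewrite <- Hl. apply abs_step_sub_step; try assumption; lra.
  - intros a b Ha Hb.
    pose proof (Rmin_l (Rmin 0 P) P'); pose proof (Rmin_r (Rmin 0 P) P').
    pose proof (Rmin_l 0 P); pose proof (Rmin_r 0 P).
    pose proof (Rmax_l (Rmax 1 (P + 1)) (P' + 1)); pose proof (Rmax_r (Rmax 1 (P + 1)) (P' + 1)).
    pose proof (Rmax_l 1 (P + 1)); pose proof (Rmax_r 1 (P + 1)).
    replace (2 * INR (length s) + 2 * (/2) ^ length s) with
      (((/2) ^ length s + leftI s - leftI s + INR (length s) * (P + 1 - P))
       + ((/2) ^ length s + leftI t - leftI t + INR (length s) * (P' + 1 - P'))) by ring.
    apply (is_RInt_plus (V := R_NormedModule)); unfold f_sigma, d_sigma;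
      [|rewrite <- Hl]; apply is_RInt_step; lra.
Qed.

Lemma no_l1_isometric_embedding :
  ~ (exists phi : (R -> R) -> (nat -> R), M_l1_isometric_embedding Psi phi).
Proof.
  intros [phi [_ Hiso]].
  assert (Hdist : forall x y D, inM Psi x -> inM Psi y -> is_L1dist x y D ->
                    is_series (fun k => Rabs (phi x k - phi y k)) D)
    by (intros; apply is_series_Reals, Hiso; auto).
  assert (M0 : inM Psi zero_fun) by (left; reflexivity).
  assert (Md : inM Psi d_fun) by (right; left; reflexivity).
  assert (Mf : forall s, s <> nil -> inM Psi (f_sigma Psi s)) by (intros; right; right; eauto).
  set (a := phi zero_fun). set (b := phi d_fun). set (X := fun s => phi (f_sigma Psi s)).
  assert (Hab : is_series (fun k => Rabs (a k - b k)) 1) by (apply Hdist; auto using L1dist_zero_d).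
  assert (Hcoord : forall n k, Rabs (a k - b k) <= (/2) ^ S n).
  { intros n. apply (l1_coordinate_le_gromov a b X (strings (S n)) 1).
    - apply NoDup_strings.
    - apply Rlt_le, half_pow_pos.
    - exact Hab.
    - intros s Hs. apply in_strings in Hs. assert (s <> nil) by (intros ->; discriminate).
      rewrite <- Hs.
      replace ((/2) ^ length s) with
        ((INR (length s) + (/2) ^ length s + 1 - (INR (length s) + 1 - (/2) ^ length s)) / 2) by field.
      apply is_series_gromov; apply Hdist; auto using L1dist_zero_f, L1dist_zero_d, L1dist_d_f.
    - intros s t Hs Ht Hst k. apply in_strings in Hs, Ht.
      assert (s <> nil) by (intros ->; discriminate). assert (t <> nil) by (intros ->; discriminate).
      apply (l1_between_coordinates a (X s) (X t) (INR (length s) + (/2) ^ length s)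
               (INR (length t) + (/2) ^ length t));
        [apply Hdist; auto using L1dist_zero_f .. |].
      replace (INR (length s) + (/2) ^ length s + (INR (length t) + (/2) ^ length t))
        with (2 * INR (length s) + 2 * (/2) ^ length s) by (rewrite Hs, Ht; ring).
      apply Hdist; auto. apply L1dist_f_f; auto. congruence.
    - apply strings_mass. }
  assert (Hab0 : forall k, Rabs (a k - b k) = 0).
  { intro k. pose proof (le_0_of_le_half_pow _ (fun n => Hcoord n k)).
    pose proof (Rabs_pos (a k - b k)). lra. }
  pose proof (is_series_zero_terms _ _ Hab0 Hab). lra.
Qed.

End TheSpaceM.

Theorem mainTheorem7 (Psi : list bool -> Z)
  (Psi_nz : forall s, s <> nil -> Psi s <> 0%Z)
  (Psi_inj : forall s t, s <> nil -> t <> nil -> Psi s = Psi t -> s = t) :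
  M_locally_finite Psi /\
  ~ (exists phi : (R -> R) -> (nat -> R), M_l1_isometric_embedding Psi phi).
Proof.
  split; [apply M_is_locally_finite | apply no_l1_isometric_embedding]; assumption.
Qed.
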